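(* Let $X$ be the Cantor set, $\alpha$ a minimal homeomorphism of $X$, and $\phi:X\to\operatorname{Isom}(\mathbb{T})$ continuous such that $\alpha\times\phi$ is minimal and not orientation preserving. For any $x_0\in X$, $m\in\mathbb{Z}$ and nonempty clopen $O\subset X$, there exists a clopen set $U\subset O$ such that $1_U$ is equivalent to $mh_\phi$ in $K_1(A_{x_0})$. Moreover, there exists $\sigma\in[[\alpha]]$ such that $\sigma(x)=x$ for all $x\notin U$ and $\sigma_\phi^*(1_U)=-1_U$.
   Context: $\alpha\times\phi:(x,t)\mapsto(\alpha(x),\phi_x(t))$; $o(\phi)(x)=0$ if $\phi_x$ preserves orientation, $1$ otherwise; orientation preserving means $o(\phi)\in\{f-f\circ\alpha^{-1}:f\in C(X,\mathbb{Z}_2)\}$. $\alpha_\phi^*$ is the automorphism of $C(X,\mathbb{Z})$ given by $\alpha_\phi^*(f)(x)=(-1)^{o(\phi)(\alpha^{-1}(x))}f(\alpha^{-1}(x))$. $K_1(A_{x_0})$ is identified with $C(X,\mathbb{Z})/\{f-\alpha_\phi^*(f):f\in C(X,\mathbb{Z}),f(x_0)=0\}$ (where $A_{x_0}$ is the subalgebra of the crossed product generated by $C(X\times\mathbb{T})$ and $uC_0((X\setminus\{x_0\})\times\mathbb{T})$), and ''equivalent in $K_1(A_{x_0})$'' means equal images in this quotient. $h_\phi(x)=1$ if $o(\phi)(\alpha^{-1}(x))=1$, $0$ otherwise. $[[\alpha]]$ (topological full group) is the set of homeomorphisms $\sigma$ of $X$ for which there is a continuous $n:X\to\mathbb{Z}$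 with $\sigma(x)=\alpha^{n(x)}(x)$; for such $\sigma$, $\sigma_\phi^*(f)=\sum_{k\in\mathbb{Z}}(\alpha_\phi^* )^k(f1_{n^{-1}(k)})$ for $f\in C(X,\mathbb{Z})$. *)

From HB Require Import structures.
From mathcomp Require Import all_boot all_order all_algebra.
From mathcomp Require Import all_classical all_reals all_analysis.
Set Implicit Arguments. Unset Strict Implicit. Unset Printing Implicit Defensive.
Import Order.TTheory GRing.Theory Num.Theory.
Import numFieldNormedType.Exports.
Local Open Scope classical_set_scope.
Local Open Scope ring_scope.

Notation X := cantor_space.

Definition circle (R : realType) : set (R * R) :=
  [set p | p.1 ^+ 2 + p.2 ^+ 2 = 1].
Arguments circle R : clear implicits.

Definition dist2 (R : realType) (p q : R * R) : R :=
  (p.1 - q.1) ^+ 2 + (p.2 - q.2) ^+ 2.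

Definition circle_isom (R : realType) (g : R * R -> R * R) : Prop :=
  [/\ forall p, circle R p -> circle R (g p),
      forall p q, circle R p -> circle R q -> dist2 (g p) (g q) = dist2 p q
    & forall q, circle R q -> exists2 p, circle R p & g p = q].

(** an isometry of the circle preserves orientation iff it is a rotation *)
Definition orient_pres (R : realType) (g : R * R -> R * R) : Prop :=
  exists a b : R, a ^+ 2 + b ^+ 2 = 1 /\
    forall p, circle R p -> g p = (a * p.1 - b * p.2, b * p.1 + a * p.2).

(** o(phi)(x) : false (=0) if phi_x preserves orientation, true (=1) otherwise *)
Definition o_phi (R : realType) (phi : X -> R * R -> R * R) (x : X) : bool :=
  ~~ `[< orient_pres (phi x) >].

Definition homeo (T : topologicalType) (f : T -> T) : Prop :=
  continuous f /\ exists g : T -> T, [/\ cancel f g, cancel g f & continuous g].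

Definition minimal_homeo (f : X -> X) : Prop :=
  homeo f /\ forall A : set X, closed A -> f @` A = A -> A = set0 \/ A = setT.

Definition skew (R : realType) (alpha : X -> X) (phi : X -> R * R -> R * R)
  (z : X * (R * R)) : X * (R * R) := (alpha z.1, phi z.1 z.2).

Definition skew_minimal (R : realType) (alpha : X -> X)
  (phi : X -> R * R -> R * R) : Prop :=
  forall B : set (X * (R * R)), B `<=` setT `*` circle R -> closed B ->
    skew alpha phi @` B = B -> B = set0 \/ B = setT `*` circle R.

(** locally constant functions = continuous functions into a discrete space
    (used for C(X, Z) and C(X, Z_2)) *)
Definition lconst (T : topologicalType) (Y : Type) (f : T -> Y) : Prop :=
  forall x, \forall y \near x, f y = f x.

(** alpha x phi is orientation preserving:
    o(phi) \in { f - f o alpha^-1 : f \in C(X, Z_2) } (Z_2 = bool, - = xor) *)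
Definition orientation_preserving (R : realType) (alphai : X -> X)
  (phi : X -> R * R -> R * R) : Prop :=
  exists f : X -> bool, lconst f /\ forall x, o_phi phi x = f x (+) f (alphai x).

Definition astar (R : realType) (alphai : X -> X) (phi : X -> R * R -> R * R)
  (f : X -> int) (x : X) : int :=
  (-1) ^+ o_phi phi (alphai x) * f (alphai x).

Definition astar_inv (R : realType) (alpha : X -> X) (phi : X -> R * R -> R * R)
  (f : X -> int) (x : X) : int :=
  (-1) ^+ o_phi phi x * f (alpha x).

Definition astar_pow (R : realType) (alpha alphai : X -> X)
  (phi : X -> R * R -> R * R) (k : int) (f : X -> int) : X -> int :=
  match k with
  | Posz n => iter n (astar alphai phi) f
  | Negz n => iter n.+1 (astar_inv alpha phi) f
  end.

Definition aiter (alpha alphai : X -> X) (k : int) (x : X) : X :=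
  match k with
  | Posz n => iter n alpha x
  | Negz n => iter n.+1 alphai x
  end.

Definition in_full_group (alpha alphai : X -> X) (sigma : X -> X)
  (n : X -> int) : Prop :=
  homeo sigma /\ lconst n /\ forall x, sigma x = aiter alpha alphai (n x) x.

(** sigma_phi^*(f) = \sum_k (alpha_phi^* )^k (f 1_{n^{-1}(k)}) (pointwise,
    a finitely supported sum) *)
Definition sigma_star (R : realType) (alpha alphai : X -> X)
  (phi : X -> R * R -> R * R) (n : X -> int) (f : X -> int) (x : X) : int :=
  \sum_(k \in [set: int])
     astar_pow alpha alphai phi k (fun y => f y * (n y == k)%:Z) x.

Definition ind (U : set X) (x : X) : int := `[< U x >]%:Z.

Definition h_phi (R : realType) (alphai : X -> X) (phi : X -> R * R -> R * R)
  (x : X) : int := (o_phi phi (alphai x))%:Z.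

(** f and g are equal in K_1(A_{x0}) =
    C(X,Z) / { f - alpha_phi^*(f) : f \in C(X,Z), f(x0) = 0 } *)
Definition K1_equiv (R : realType) (alphai : X -> X) (phi : X -> R * R -> R * R)
  (x0 : X) (f g : X -> int) : Prop :=
  exists f' : X -> int, [/\ lconst f', f' x0 = 0 &
    forall x, f x - g x = f' x - astar alphai phi f' x].

(* Write o for o(phi). It is locally constant and, as alpha x phi is not orientation
   preserving, it is not a coboundary over alpha.
   Given a nonempty clopen V, let U be the set of visits of alpha-orbits to V whose parity
   since the previous visit is odd. The first-return map sigma to U then has odd parity
   along every excursion, which is sigma_phi^*(1_U) = -1_U, and 1_U = (-1)^d h_phi in
   K_1(A_x0), where d is the parity of the backward orbit of x0 up to its first visit to V.
   If U were empty for some V, o would be a coboundary; hence the backward orbit of x0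
   visits every nonempty clopen set at times of both parities, and shrinking V around a
   suitable visit makes d arbitrary. A disjoint union of |m| such pieces inside O realises
   m h_phi. *)

From HB Require Import structures.
From mathcomp Require Import all_boot all_order all_algebra.
From mathcomp Require Import all_classical all_reals all_analysis.
From mathcomp Require Import zify ring lra.
Set Implicit Arguments.
Unset Strict Implicit.
Unset Printing Implicit Defensive.

Import Order.TTheory GRing.Theory Num.Theory.
Import numFieldNormedType.Exports.
Local Open Scope classical_set_scope.
Local Open Scope ring_scope.

(** * Locally constant functions *)

Section LocallyConstant.
Variable T : topologicalType.

Lemma lconst_cst (A : Type) (c : A) : lconst (fun _ : T => c).
Proof. by move=> x; apply: nearW. Qed.

Lemma lconst_map (A B : Type) (h : A -> B) (f : T -> A) :
  lconst f -> lconst (fun x => h (f x)).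
Proof. by move=> lf x; apply: filterS (lf x) => y ->. Qed.

Lemma lconst_map2 (A B C : Type) (h : A -> B -> C) (f : T -> A) (g : T -> B) :
  lconst f -> lconst g -> lconst (fun x => h (f x) (g x)).
Proof. by move=> lf lg x; apply: filterS2 (lf x) (lg x) => y -> ->. Qed.

Lemma lconst_comp (S : topologicalType) (A : Type) (f : S -> A) (c : T -> S) :
  lconst f -> continuous c -> lconst (fun x => f (c x)).
Proof. by move=> lf cc x; exact: cc x _ (lf (c x)). Qed.

Lemma lconst_select (A : Type) (N : T -> nat) (F : nat -> T -> A) :
  lconst N -> (forall k, lconst (F k)) -> lconst (fun x => F (N x) x).
Proof. by move=> lN lF x; apply: filterS2 (lN x) (lF (N x) x) => y ->. Qed.

Lemma continuous_select (S : topologicalType) (N : T -> nat) (F : nat -> T -> S) :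
  lconst N -> (forall k, continuous (F k)) -> continuous (fun x => F (N x) x).
Proof.
move=> lN cF x; apply: cvg_trans (cF (N x) x).
by apply: near_eq_cvg; apply: filterS (lN x) => y ->.
Qed.

Lemma clopen_lconst (O : set T) : clopen O -> lconst (fun x => `[< O x >]).
Proof.
case=> oO cO x; have [Ox|nOx] := pselect (O x).
  have : nbhs x O by apply: open_nbhs_nbhs.
  by apply: filterS => y Oy; rewrite !asboolT.
have : nbhs x (~` O) by apply: open_nbhs_nbhs; split => //; exact: closed_openC.
by apply: filterS => y nOy; rewrite !asboolF.
Qed.

Lemma lconst_clopen (u : T -> bool) : lconst u -> clopen [set x | u x].
Proof.
move=> lu; split; first by rewrite openE => x ux; apply: filterS (lu x) => y /= ->.
by rewrite -openC openE => x ux; apply: filterS (lu x) => y /= ->.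
Qed.

Lemma continuous_iter (f : T -> T) : continuous f -> forall n, continuous (iter n f).
Proof.
move=> cf; elim => [|n IH] /= x; first exact: cvg_id.
exact: continuous_comp (IH x) (cf _).
Qed.

End LocallyConstant.
Arguments continuous_iter {T f} cf n.

Lemma lconst_cantor_coord (n : nat) : lconst (fun y : X => y n).
Proof. by move=> x; exact: (@proj_continuous nat (fun _ => bool) n x) _ (discrete_set1 (x n)). Qed.

Lemma cantor_separate (y : X) (q : nat -> X) (J : nat) :
  (forall j, (j < J)%N -> q j <> y) ->
  exists v : X -> bool, [/\ lconst v, v y & forall j, (j < J)%N -> ~~ v (q j)].
Proof.
elim: J => [|J IH] hq; first by exists (fun _ => true); split => //; exact: lconst_cst.
have [v [lv vy hv]] := IH (fun j jJ => hq j (ltnW jJ)).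
have [n /eqP qn] : exists n, q J n != y n.
  apply: contrapT => nex; apply: (hq J (ltnSn J)); apply: funext => n.
  by apply/eqP; apply: contrapT => ne; apply: nex; exists n; apply/negP.
exists (fun y' => v y' && (y' n == y n)); split.
- exact: (lconst_map2 (fun a (b : bool) => a && (b == y n)) lv (lconst_cantor_coord n)).
- by rewrite vy eqxx.
- move=> j; rewrite ltnS leq_eqVlt => /orP [/eqP -> | jJ].
    by apply/negP => /andP [_ /eqP].
  by rewrite (negbTE (hv j jJ)).
Qed.

Lemma closed_finite_range (q : nat -> X) (p : nat) :
  closed [set y | exists2 j, (j < p)%N & y = q j].
Proof.
rewrite -openC openE => y nFy; rewrite /interior.
have [v [lv vy notv]] := @cantor_separate y q p (fun j jp e => nFy (ex_intro2 _ _ j jp (esym e))).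
by apply: filterS (lv y) => y' e [j jp ej]; have := notv j jp; rewrite -ej e vy.
Qed.

Lemma cantor_not_finite (q : nat -> X) (p : nat) :
  ~ (forall y : X, exists2 j, (j < p)%N & y = q j).
Proof.
move=> onto; pose e (i : 'I_p.+1) : X := fun n => n == i.
have /choice [idx idxE] : forall i : 'I_p.+1, exists j : 'I_p, e i = q j.
  by move=> i; have [j jp ->] := onto (e i); exists (Ordinal jp).
have idx_inj : injective idx.
  move=> i i' eq_idx; have /(congr1 (fun f : X => f i)) : e i = e i' by rewrite !idxE eq_idx.
  by rewrite /e eqxx => /esym /eqP ii'; apply: val_inj.
by have := leq_card idx idx_inj; rewrite !card_ord ltnn.
Qed.

(** * First hitting and return times *)

Definition jump (T : Type) (f : T -> T) (n : T -> nat) (x : T) : T := iter (n x) f x.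

Lemma iter_cancel (T : Type) (f g : T -> T) : cancel f g ->
  forall k n x, (k <= n)%N -> iter k g (iter n f x) = iter (n - k) f x.
Proof.
move=> fK; elim=> [|k IH] n x kn; first by rewrite subn0.
rewrite iterS IH; last by lia.
have -> : (n - k = (n - k.+1).+1)%N by lia.
by rewrite iterS fK.
Qed.

Lemma jump_add (T : Type) (f : T -> T) (u : T -> bool) (n1 n2 : T -> nat) :
  (forall x, ~~ u x -> n1 x = 0%N) -> (forall x, u x -> n2 x = 0%N) ->
  forall x, jump f (fun y => n1 y + n2 y)%N x = if u x then jump f n1 x else jump f n2 x.
Proof. by move=> out1 in1 x; rewrite /jump; case: ifPn => [/in1|/out1] ->; rewrite ?addn0. Qed.

Section FirstHit.
Variables (T : Type) (p : T -> bool) (f : T -> T).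

(* [n] is fuel: if the orbit does not meet [p] within [n] steps the value is junk. *)
Fixpoint first_hit (n : nat) (x : T) : nat :=
  if p x then 0 else if n is n'.+1 then (first_hit n' (f x)).+1 else 0.

Definition return_time (n : nat) (x : T) : nat :=
  if p x then (first_hit n (f x)).+1 else 0.

Lemma first_hitE k n x : (k <= n)%N ->
  (forall j, (j < k)%N -> ~~ p (iter j f x)) -> p (iter k f x) -> first_hit n x = k.
Proof.
elim: k n x => [|k IH] n x kn before pk /=; first by case: n kn => [|n] _ /=; rewrite pk.
case: n kn => [|n] // kn /=; rewrite (negbTE (before 0%N isT)) (IH n (f x)) //.
- by move=> j jk; rewrite -iterSr; apply: before.
- by rewrite -iterSr.
Qed.

Lemma first_hitP n x k : (k <= n)%N -> p (iter k f x) ->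
  [/\ (first_hit n x <= k)%N, p (iter (first_hit n x) f x)
    & forall j, (j < first_hit n x)%N -> ~~ p (iter j f x)].
Proof.
move=> kn pk; have hit : exists k, p (iter k f x) by exists k.
case: (ex_minnP hit) => k0 pk0 k0_min.
have before j : (j < k0)%N -> ~~ p (iter j f x).
  by move=> jk0; apply/negP => /k0_min; rewrite leqNgt jk0.
have k0k := k0_min _ pk.
by rewrite (first_hitE (leq_trans k0k kn) before pk0).
Qed.

Lemma first_hit_fuel n x k : (k <= n)%N -> p (iter k f x) ->
  first_hit n.+1 x = first_hit n x.
Proof.
move=> kn pk; have [le_k hit before] := first_hitP kn pk.
by apply: first_hitE => //; apply: (leq_trans le_k); lia.
Qed.

Lemma return_time0 n x : ~~ p x -> return_time n x = 0%N.
Proof. by rewrite /return_time => /negbTE ->. Qed.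

Lemma return_timeP n x : (exists2 k, (0 < k <= n)%N & p (iter k f x)) -> p x ->
  [/\ (0 < return_time n x <= n)%N, p (iter (return_time n x) f x)
    & forall j, (0 < j < return_time n x)%N -> ~~ p (iter j f x)].
Proof.
move=> [k /andP [k0 kn] pk] px; rewrite /return_time px.
have pk' : p (iter k.-1 f (f x)) by rewrite -iterSr prednK.
have [le_k hit before] := @first_hitP n (f x) k.-1 (leq_trans (leq_pred k) kn) pk'.
split; [lia | by rewrite iterSr |].
move=> [|j] //= jlt; rewrite -iterS iterSr; exact: before.
Qed.

End FirstHit.

Lemma return_time_cancel (T : Type) (p : T -> bool) (f g : T -> T) (nf ng : nat) :
  cancel f g ->
  (forall x, p x -> exists2 k, (0 < k <= nf)%N & p (iter k f x)) ->
  (forall x, p x -> exists2 k, (0 < k <= ng)%N & p (iter k g x)) ->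
  forall x, jump g (return_time p g ng) (jump f (return_time p f nf) x) = x.
Proof.
move=> fK bf bg x; rewrite /jump.
case px : (p x); last by rewrite !return_time0 ?px.
have [/andP [k0 kn] pk before] := return_timeP (bf x px) px.
set k := return_time p f nf x in k0 kn pk before *.
have [/andP [l0 ln] pl before'] := return_timeP (bg _ pk) pk.
set l := return_time p g ng _ in l0 ln pl before' *.
suff -> : l = k by rewrite (iter_cancel fK) // subnn.
apply/eqP; rewrite eqn_leq; apply/andP; split; rewrite leqNgt; apply/negP => lt.
  by have := before' k; rewrite k0 lt (iter_cancel fK) // subnn /= px => /(_ isT).
have : ~~ p (iter (k - l) f x) by apply: before; lia.
by rewrite -(iter_cancel fK) ?pl //; lia.
Qed.

Section LocallyConstantHit.
Variables (T : topologicalType) (p : T -> bool) (f : T -> T).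
Hypotheses (lp : lconst p) (cf : continuous f).

Lemma lconst_first_hit n : lconst (first_hit p f n).
Proof.
elim: n => [|n IH] /=; first exact: (lconst_map (fun b : bool => if b then 0%N else 0%N) lp).
exact: (lconst_map2 (fun (b : bool) k => if b then 0%N else k.+1) lp (lconst_comp IH cf)).
Qed.

Lemma lconst_return_time n : lconst (return_time p f n).
Proof.
exact: (lconst_map2 (fun (b : bool) k => if b then k.+1 else 0%N) lp
  (lconst_comp (lconst_first_hit n) cf)).
Qed.

End LocallyConstantHit.

(** * Minimal homeomorphisms *)

Section MinimalReturn.
Variables (T : ptopologicalType) (f g : T -> T).
Hypotheses (compactT : compact [set: T]) (cf : continuous f) (cg : continuous g).
Hypotheses (fK : cancel f g) (gK : cancel g f).
Hypothesis f_minimal : forall A : set T, closed A -> f @` A = A -> A = set0 \/ A = setT.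

Lemma minimal_inv (A : set T) : closed A -> g @` A = A -> A = set0 \/ A = setT.
Proof.
move=> cA gA; apply: f_minimal => //; apply/seteqP; split.
  by move=> _ [x Ax <-]; move: Ax; rewrite -{1}gA => -[y Ay <-]; rewrite gK.
by move=> y Ay; exists (g y); [rewrite -gA; exists y | rewrite gK].
Qed.

Lemma minimal_orbit_meets (V : set T) : open V -> V !=set0 ->
  forall x, exists k, V (iter k f x) \/ V (iter k g x).
Proof.
move=> oV [v Vv].
pose C := [set x | forall k, ~ V (iter k f x) /\ ~ V (iter k g x)].
suff C0 : C = set0.
  move=> x; apply: contrapT => nx; have : C x.
    by move=> k; split => Vk; apply: nx; exists k; [left | right].
  by rewrite C0.
have cC : closed C.
  rewrite -openC openE => x nCx; rewrite /interior.
  have [k [Vk|Vk]] : exists k, V (iter k f x) \/ V (iter k g x).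
    apply: contrapT => nk; apply: nCx => k.
    by split => Vk; apply: nk; exists k; [left | right].
  - have : nbhs x (iter k f @^-1` V).
      by apply: (continuous_iter cf); exact: open_nbhs_nbhs.
    by apply: filterS => y Vy Cy; case: (Cy k).
  - have : nbhs x (iter k g @^-1` V).
      by apply: (continuous_iter cg); exact: open_nbhs_nbhs.
    by apply: filterS => y Vy Cy; case: (Cy k).
have fC : f @` C = C.
  apply/seteqP; split.
    move=> _ [x Cx <-] k; split; first by rewrite -iterSr; case: (Cx k.+1).
    by case: k => [|k]; [case: (Cx 1%N) | rewrite iterSr fK; case: (Cx k)].
  move=> y Cy; exists (g y); last by rewrite gK.
  move=> k; split; last by rewrite -iterSr; case: (Cy k.+1).
  by case: k => [|k]; [case: (Cy 1%N) | rewrite iterSr gK; case: (Cy k)].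
case: (f_minimal cC fC) => // CT.
by have /(_ 0%N) [] : C v by rewrite CT.
Qed.

Lemma minimal_return_bound (V : set T) : open V -> V !=set0 ->
  exists B : nat, forall x, exists2 k : nat, (0 < k <= B)%N & V (iter k f x).
Proof.
move=> oV V0.
have cover : [set: T] `<=`
    \bigcup_(k in [set: nat]) (iter k f @^-1` V `|` iter k g @^-1` V).
  by move=> x _; have [k Vk] := minimal_orbit_meets oV V0 x; exists k.
have open_cover k : [set: nat] k -> open (iter k f @^-1` V `|` iter k g @^-1` V).
  by move=> _; apply: openU; apply: open_comp oV => y _; apply: continuous_iter.
have := compactT; rewrite compact_cover => /(_ nat _ _ open_cover cover).
move=> [D _ finite_cover].
pose N := (\max_(k <- finmap.enum_fset D) k)%N.
(* Every [f^(N+1) x] lies within [N] steps of [V], forwards or backwards. *)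
exists N.*2.+1 => x; have [k Dk Vk] := finite_cover (iter N.+1 f x) I.
have kN : (k <= N)%N by exact: (@leq_bigmax_seq _ _ xpredT id k).
case: Vk => /= Vk; first by exists (k + N.+1)%N; [lia | rewrite iterD].
exists (N.+1 - k)%N; first by lia.
by move: Vk; rewrite -(iter_cancel fK) //; lia.
Qed.

Lemma minimal_return_time_bound (p : T -> bool) : lconst p ->
  exists B, forall x, p x -> exists2 k, (0 < k <= B)%N & p (iter k f x).
Proof.
move=> lp; have [[z pz]|none] := pselect (exists z, p z).
  have [op _] := lconst_clopen lp; have p0 : [set x | p x] !=set0 by exists z.
  by have [B hit] := minimal_return_bound op p0; exists B => x _; apply: hit.
by exists 0%N => x px; exfalso; apply: none; exists x.
Qed.

End MinimalReturn.

(** * Isometries of the circle *)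

Section CircleIsometries.
Variable R : realType.
Implicit Type g : R * R -> R * R.

Definition isom_det g : R := (g (1, 0)).1 * (g (0, 1)).2 - (g (1, 0)).2 * (g (0, 1)).1.

Lemma circle10 : circle R (1, 0).
Proof. by rewrite /circle /= expr0n /= addr0 expr1n. Qed.

Lemma circle01 : circle R (0, 1).
Proof. by rewrite /circle /= expr0n /= add0r expr1n. Qed.

Lemma circle_isom_basis g : circle_isom g ->
  [/\ (g (1, 0)).1 ^+ 2 + (g (1, 0)).2 ^+ 2 = 1, (g (0, 1)).1 ^+ 2 + (g (0, 1)).2 ^+ 2 = 1
    & (g (1, 0)).1 * (g (0, 1)).1 + (g (1, 0)).2 * (g (0, 1)).2 = 0].
Proof.
case=> onC dist _; have := dist _ _ circle10 circle01.
move: (onC _ circle10) (onC _ circle01); rewrite /circle /dist2 /=.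
case: (g (1, 0)) => a1 a2; case: (g (0, 1)) => b1 b2 /= ca cb d.
by split => //; move: d; rewrite !subr0 !sub0r; nra.
Qed.

Lemma isom_det_sign g : circle_isom g -> isom_det g = 1 \/ isom_det g = -1.
Proof.
move=> /circle_isom_basis; rewrite /isom_det.
case: (g (1, 0)) => a1 a2; case: (g (0, 1)) => b1 b2 /= [ca cb ab].
have : (a1 * b2 - a2 * b1 - 1) * (a1 * b2 - a2 * b1 + 1) = 0 by nra.
by move=> /eqP; rewrite mulf_eq0 => /orP [] /eqP h; [left | right]; lra.
Qed.

Lemma orient_presE g : circle_isom g -> orient_pres g <-> isom_det g = 1.
Proof.
move=> iso; have [ca cb ab] := circle_isom_basis iso; rewrite /isom_det.
split.
  case=> a [b [ab1 rot]]; rewrite (rot _ circle10) (rot _ circle01) /=; nra.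
move: iso ca cb ab => [onC dist _].
case e10 : (g (1, 0)) => [a1 a2]; case e01 : (g (0, 1)) => [b1 b2] /= ca cb ab det.
have /eqP : (b1 + a2) ^+ 2 + (b2 - a1) ^+ 2 = 0 by nra.
rewrite paddr_eq0 ?sqr_ge0 // !sqrf_eq0 subr_eq0 addr_eq0 => /andP [/eqP b1E /eqP b2E].
exists a1, a2; split => // -[p1 p2] cp.
have := dist _ _ cp circle10; have := dist _ _ cp circle01; have := onC _ cp.
move: cp; rewrite /circle /dist2 e10 e01 b1E b2E /=.
case: (g (p1, p2)) => q1 q2 /= cp cq d1 d0.
(* A point of the circle is determined by its distances to the orthonormal frame. *)
have e1 : q1 * a1 + q2 * a2 = p1 by nra.
have e2 : - q1 * a2 + q2 * a1 = p2 by nra.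
by congr (_, _); rewrite -e1 -e2 -[LHS]mulr1 -ca; ring.
Qed.

End CircleIsometries.

Lemma lconst_sign_valued (T : topologicalType) (R : realType) (t : T -> R) :
  (forall x, t x = 1 \/ t x = -1) -> continuous t -> lconst t.
Proof.
move=> pm ct x; have := ct x; move=> /cvgrPdist_lt /(_ 1 ltr01).
apply: filterS => y; rewrite ltr_norml => /andP [h1 h2].
by case: (pm x) => hx; case: (pm y) => hy; rewrite hx hy in h1 h2 *; lra.
Qed.

Lemma continuous_slice (R : realType) (phi : X -> R * R -> R * R) (p : R * R) :
  {within [set: X] `*` circle R, continuous (fun z : X * (R * R) => phi z.1 z.2)} ->
  circle R p -> continuous (fun x => phi x p).
Proof.
move=> cphi cp x.
have cphi_x := (subspace_continuousP _ _).1 cphi (x, p) (conj I cp).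
have pair_x : (fun y => (y, p)) @ x --> within ([set: X] `*` circle R) (nbhs (x, p)).
  move=> W /= Wxp.
  have : nbhs x (fun y => ([set: X] `*` circle R) (y, p) -> W (y, p)).
    exact: (cvg_pair cvg_id (cvg_cst p)) _ Wxp.
  by apply: filterS => y; apply; split.
exact: cvg_comp pair_x cphi_x.
Qed.

Lemma lconst_o_phi (R : realType) (phi : X -> R * R -> R * R) :
  (forall x, circle_isom (phi x)) ->
  {within [set: X] `*` circle R, continuous (fun z : X * (R * R) => phi z.1 z.2)} ->
  lconst (o_phi phi).
Proof.
move=> iso cphi.
have cdet : continuous (fun x => isom_det (phi x)).
  have c10 := continuous_slice cphi (circle10 R).
  have c01 := continuous_slice cphi (circle01 R).
  move=> x; apply: cvgB; apply: cvgM; apply: cvg_comp;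
    by [apply: c10 | apply: c01 | apply: cvg_fst | apply: cvg_snd].
have -> : o_phi phi = fun x => isom_det (phi x) != 1.
  apply: funext => x; rewrite /o_phi; congr (~~ _).
  by apply/asboolP/eqP => /(orient_presE (iso x)).
exact: (lconst_map (fun r : R => r != 1)
  (lconst_sign_valued (fun x => isom_det_sign (iso x)) cdet)).
Qed.

(** * Odd returns of a cocycle that is not a coboundary *)

Section OddReturns.
Variables (alpha alphai : X -> X) (o : X -> bool).
Hypotheses (alphaK : cancel alpha alphai) (alphaiK : cancel alphai alpha).
Hypotheses (alpha_cont : continuous alpha) (alphai_cont : continuous alphai).
Hypothesis alpha_minimal :
  forall A : set X, closed A -> alpha @` A = A -> A = set0 \/ A = setT.
Hypothesis o_lconst : lconst o.
Hypothesis o_not_coboundary :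
  ~ (exists f : X -> bool, lconst f /\ forall x, o x = f x (+) f (alphai x)).

Fixpoint back_parity (x : X) (j : nat) : bool :=
  if j is j'.+1 then back_parity x j' (+) o (iter j alphai x) else false.

Fixpoint fwd_parity (y : X) (j : nat) : bool :=
  if j is j'.+1 then fwd_parity y j' (+) o (iter j' alpha y) else false.

Lemma back_parityS x j : back_parity x j.+1 = o (alphai x) (+) back_parity (alphai x) j.
Proof.
elim: j => [|j IH] /=; first by rewrite addbF.
by move: IH => /= ->; rewrite -iterSr addbA.
Qed.

Lemma back_parityD x a b :
  back_parity x (a + b) = back_parity x a (+) back_parity (iter a alphai x) b.
Proof. by elim: b => [|b IH] /=; rewrite ?addn0 ?addbF // addnS /= IH -iterD addnC addbA. Qed.

Lemma back_parity_iter y k : back_parity (iter k alpha y) k = fwd_parity y k.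
Proof. by elim: k => [|k IH] //; rewrite back_parityS iterS alphaK IH /= addbC. Qed.

Lemma lconst_back_parity j : lconst (back_parity ^~ j).
Proof.
elim: j => [|j IH] /=; first exact: lconst_cst.
exact: (lconst_map2 addb IH (lconst_comp o_lconst (continuous_iter alphai_cont j.+1))).
Qed.

Lemma alphai_minimal (A : set X) : closed A -> alphai @` A = A -> A = set0 \/ A = setT.
Proof. exact: (minimal_inv alphaiK alpha_minimal). Qed.

Lemma hit_bound_alphai (p : X -> bool) : lconst p -> (exists z, p z) ->
  exists B, forall x, exists2 k, (0 < k <= B)%N & p (iter k alphai x).
Proof.
move=> lp [z pz]; have [op _] := lconst_clopen lp.
exact: (minimal_return_bound cantor_space_compact alphai_cont alpha_cont alphaiK alphaK
  alphai_minimal op (ex_intro _ z pz)).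
Qed.

Lemma return_bound_alpha (p : X -> bool) : lconst p ->
  exists B, forall x, p x -> exists2 k, (0 < k <= B)%N & p (iter k alpha x).
Proof.
exact: (minimal_return_time_bound cantor_space_compact alpha_cont alphai_cont alphaK alphaiK
  alpha_minimal).
Qed.

Lemma return_bound_alphai (p : X -> bool) : lconst p ->
  exists B, forall x, p x -> exists2 k, (0 < k <= B)%N & p (iter k alphai x).
Proof.
exact: (minimal_return_time_bound cantor_space_compact alphai_cont alpha_cont alphaiK alphaK
  alphai_minimal).
Qed.

Lemma alphai_aperiodic z p : (0 < p)%N -> iter p alphai z <> z.
Proof.
move=> p0 zp; pose F := [set y | exists2 j, (j < p)%N & y = iter j alphai z].
have alphaiF : alphai @` F = F.
  apply/seteqP; split.
    move=> _ [y [j jp ->] <-]; rewrite -iterS.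
    case: (ltnP j.+1 p) => jp'; first by exists j.+1.
    by exists 0%N => //; have -> : j.+1 = p by lia.
  move=> y [[|j] jp ->].
    by exists (iter p.-1 alphai z); [exists p.-1 => //; lia | rewrite -iterS prednK].
  by exists (iter j alphai z); [exists j => //; lia | rewrite iterS].
have Fz : F z by exists 0%N.
have closedF : closed F := @closed_finite_range (fun j => iter j alphai z) p.
case: (alphai_minimal closedF alphaiF) => [F0|FT]; first by rewrite F0 in Fz.
by apply: (@cantor_not_finite (fun j => iter j alphai z) p) => y; have : F y by rewrite FT.
Qed.

Lemma iter_alphai_inj x a b : iter a alphai x = iter b alphai x -> a = b.
Proof.
wlog ab : a b / (a <= b)%N.
  by move=> H e; case: (leqP a b) => [ab | /ltnW ba]; [exact: H | apply/esym/(H _ _ ba)/esym].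
move=> e; apply/eqP; rewrite eqn_leq ab /= leqNgt; apply/negP => lt.
apply: (@alphai_aperiodic (iter a alphai x) (b - a)%N); first by lia.
by rewrite -iterD subnK 1?ltnW // -e.
Qed.

(* [u] and [sigma := jump alpha ns], with inverse [jump alphai nt], realise the theorem
   with [c] in place of [m]: [g] witnesses the K_1 relation, and [o] has odd parity along
   every [sigma]-excursion. *)
Record flip_witness (x0 : X) (c : int) (u : X -> bool) (g : X -> int) (ns nt : X -> nat) :
    Prop := FlipWitness {
  fw_lconst_u : lconst u;
  fw_lconst_g : lconst g;
  fw_lconst_ns : lconst ns;
  fw_lconst_nt : lconst nt;
  fw_g_x0 : g x0 = 0;
  fw_K1 : forall x,
    (u x)%:Z - c * (o (alphai x))%:Z = g x - (-1) ^+ o (alphai x) * g (alphai x);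
  fw_sigmaK : cancel (jump alphai nt) (jump alpha ns);
  fw_tauK : cancel (jump alpha ns) (jump alphai nt);
  fw_fixed : forall x, ~~ u x -> ns x = 0%N /\ nt x = 0%N;
  fw_stable : forall x, u x ->
    [/\ u (jump alpha ns x), u (jump alphai nt x) & fwd_parity x (ns x)] }.

Lemma flip_witness0 x0 :
  flip_witness x0 0 (fun _ => false) (fun _ => 0) (fun _ => 0%N) (fun _ => 0%N).
Proof.
split => //; try exact: (lconst_cst _).
by move=> x; rewrite mul0r mulr0 !subr0.
Qed.

Lemma flip_witness_union x0 c1 u1 g1 ns1 nt1 c2 u2 g2 ns2 nt2 :
  flip_witness x0 c1 u1 g1 ns1 nt1 -> flip_witness x0 c2 u2 g2 ns2 nt2 ->
  (forall x, u1 x -> ~~ u2 x) ->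
  flip_witness x0 (c1 + c2) (fun x => u1 x || u2 x) (fun x => g1 x + g2 x)
    (fun x => ns1 x + ns2 x)%N (fun x => nt1 x + nt2 x)%N.
Proof.
move=> W1 W2 dj.
have out1 x : ~~ u1 x -> ns1 x = 0%N /\ nt1 x = 0%N := fun nu1x => fw_fixed W1 nu1x.
have in1 x : u1 x -> ns2 x = 0%N /\ nt2 x = 0%N := fun u1x => fw_fixed W2 (dj x u1x).
have sE := jump_add alpha (fun x h => proj1 (out1 x h)) (fun x h => proj1 (in1 x h)).
have tE := jump_add alphai (fun x h => proj2 (out1 x h)) (fun x h => proj2 (in1 x h)).
have stable2 x : ~~ u1 x -> ~~ u1 (jump alpha ns2 x) && ~~ u1 (jump alphai nt2 x).
  case u2x: (u2 x) => nu1x.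
    by have [s2 t2 _] := fw_stable W2 u2x; rewrite !(contraL (dj _)) ?s2 ?t2.
  by rewrite /jump; have [-> ->] := fw_fixed W2 (negbT u2x); rewrite /= nu1x.
split.
- exact: (lconst_map2 orb (fw_lconst_u W1) (fw_lconst_u W2)).
- exact: (lconst_map2 +%R (fw_lconst_g W1) (fw_lconst_g W2)).
- exact: (lconst_map2 addn (fw_lconst_ns W1) (fw_lconst_ns W2)).
- exact: (lconst_map2 addn (fw_lconst_nt W1) (fw_lconst_nt W2)).
- by rewrite (fw_g_x0 W1) (fw_g_x0 W2) addr0.
- move=> x; have -> : ((u1 x || u2 x))%:Z = (u1 x)%:Z + (u2 x)%:Z.
    by case: (boolP (u1 x)) => [/dj/negbTE ->|]; case: (u2 x).
  by rewrite mulrDl opprD addrACA (fw_K1 W1) (fw_K1 W2) mulrDr opprD addrACA.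
- move=> x; rewrite tE; case: ifPn => u1x.
    by have [_ t1 _] := fw_stable W1 u1x; rewrite sE t1 (fw_sigmaK W1).
  by have /andP [_ t2] := stable2 x u1x; rewrite sE (negbTE t2) (fw_sigmaK W2).
- move=> x; rewrite sE; case: ifPn => u1x.
    by have [s1 _ _] := fw_stable W1 u1x; rewrite tE s1 (fw_tauK W1).
  by have /andP [s2 _] := stable2 x u1x; rewrite tE (negbTE s2) (fw_tauK W2).
- by move=> x /norP [/out1 [-> ->] /(fw_fixed W2) [-> ->]].
- move=> x u12x; rewrite sE tE; case: ifPn => u1x.
    by have [s1 t1 odd1] := fw_stable W1 u1x; rewrite s1 t1 (proj1 (in1 x u1x)) addn0.
  have u2x : u2 x by rewrite (negbTE u1x) in u12x.
  by have [s2 t2 odd2] := fw_stable W2 u2x; rewrite s2 t2 !orbT (proj1 (out1 x u1x)).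
Qed.

Section VisitParity.
Variables (v : X -> bool) (B : nat).
Hypothesis v_lconst : lconst v.
Hypothesis v_hit : forall x, exists2 k, (0 < k <= B)%N & v (iter k alphai x).

(* The fuel [B.+1] exceeds every backward hitting time of [v], so that
   [last_visit_parity] obeys the recursion [last_visit_parity_alpha] at every point. *)
Definition last_visit_parity (x : X) : bool := back_parity x (first_hit v alphai B.+1 x).

(* Visits to [v] reached with odd parity from the previous visit. *)
Definition odd_visits (x : X) : bool :=
  v x && (o (alphai x) (+) last_visit_parity (alphai x)).

Lemma lconst_last_visit_parity : lconst last_visit_parity.
Proof.
apply: (lconst_select (F := fun k x => back_parity x k)).
  exact: (lconst_first_hit v_lconst alphai_cont).
exact: lconst_back_parity.
Qed.

Lemma lconst_odd_visits : lconst odd_visits.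
Proof.
exact: (lconst_map2 andb v_lconst (lconst_map2 addb (lconst_comp o_lconst alphai_cont)
  (lconst_comp lconst_last_visit_parity alphai_cont))).
Qed.

Lemma last_visit_parity_alpha y :
  last_visit_parity (alpha y) = if v (alpha y) then false else o y (+) last_visit_parity y.
Proof.
rewrite /last_visit_parity [in LHS]/=; case: (v (alpha y)) => //.
have [k /andP [_ kB] vk] := v_hit y.
by rewrite alphaK back_parityS alphaK (first_hit_fuel kB vk).
Qed.

Lemma odd_visits_alpha y : odd_visits (alpha y) = v (alpha y) && (o y (+) last_visit_parity y).
Proof. by rewrite /odd_visits alphaK. Qed.

Lemma odd_visits_nonempty : exists z, odd_visits z.
Proof.
apply: contrapT => none; apply: o_not_coboundary.
exists (fun x => last_visit_parity (alpha x)).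
split; first exact: (lconst_comp lconst_last_visit_parity alpha_cont).
move=> x; rewrite alphaiK last_visit_parity_alpha.
have : ~~ odd_visits (alpha x) by apply/negP => ux; apply: none; exists (alpha x).
rewrite odd_visits_alpha; case: (v (alpha x)) => /=; last by rewrite -addbA addbb addbF.
by case: (o x); case: (last_visit_parity x).
Qed.

Lemma odd_excursion x k : odd_visits x -> (0 < k)%N ->
  (forall j, (0 < j < k)%N -> ~~ odd_visits (iter j alpha x)) ->
  odd_visits (iter k alpha x) -> fwd_parity x k.
Proof.
move=> /andP [vx _] k0 between uk.
have parity_j j : (j < k)%N -> last_visit_parity (iter j alpha x) = fwd_parity x j.
  elim: j => [|j IH] jk; first by rewrite /last_visit_parity /= vx.
  have : ~~ odd_visits (iter j.+1 alpha x) by apply: between; lia.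
  rewrite iterS last_visit_parity_alpha odd_visits_alpha IH 1?ltnW //=.
  by case: (v _) => /= [/negbTE <-|_]; rewrite addbC.
case: k k0 between uk parity_j => // k _ _ uk parity_j.
by move: uk; rewrite iterS odd_visits_alpha parity_j // addbC => /andP [].
Qed.

Lemma odd_visit_flips_parity x J : odd_visits (iter J alphai x) ->
  exists2 J', (J < J')%N & v (iter J' alphai x) && (back_parity x J' == ~~ back_parity x J).
Proof.
rewrite /odd_visits -iterS => /andP [_ odd].
have [k /andP [_ kB] vk] := v_hit (iter J.+1 alphai x).
have [_ vb _] := @first_hitP _ v alphai B.+1 _ _ (leqW kB) vk.
exists (J.+1 + first_hit v alphai B.+1 (iter J.+1 alphai x))%N; first by lia.
rewrite {1}addnC iterD vb back_parityD /=.
by move: odd; rewrite /last_visit_parity -addbA => ->; rewrite addbT.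
Qed.

Lemma flip_witness_odd_visits x0 J (d : bool) :
  (forall j, (j < J)%N -> ~~ v (iter j alphai x0)) -> v (iter J alphai x0) ->
  back_parity x0 J = d ->
  exists g ns nt, flip_witness x0 ((-1) ^+ d) odd_visits g ns nt.
Proof.
move=> before vJ parJ.
have [Bf ret_f] := return_bound_alpha lconst_odd_visits.
have [Bb ret_b] := return_bound_alphai lconst_odd_visits.
pose g x : int := if last_visit_parity x == d then 0 else - (-1) ^+ d.
exists g, (return_time odd_visits alpha Bf), (return_time odd_visits alphai Bb); split.
- exact: lconst_odd_visits.
- exact: (lconst_map (fun b => if b == d then 0 else - (-1) ^+ d) lconst_last_visit_parity).
- exact: (lconst_return_time lconst_odd_visits alpha_cont).
- exact: (lconst_return_time lconst_odd_visits alphai_cont).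
- have [k /andP [_ kB] vk] := v_hit x0.
  have Jk : (J <= k)%N by rewrite leqNgt; apply/negP => kJ; have := before k kJ; rewrite vk.
  have JB : (J <= B.+1)%N by lia.
  by rewrite /g /last_visit_parity (first_hitE JB before vJ) parJ eqxx.
- move=> x; have := last_visit_parity_alpha (alphai x); rewrite alphaiK /g /odd_visits => ->.
  by case: (v x); case: (o (alphai x)); case: (last_visit_parity (alphai x)); case: (d).
- exact: (return_time_cancel alphaiK ret_b ret_f).
- exact: (return_time_cancel alphaK ret_f ret_b).
- by move=> x nu; rewrite !return_time0.
- move=> x ux; have [/andP [k0 _] uk between] := return_timeP (ret_f x ux) ux.
  have [_ uk' _] := return_timeP (ret_b x ux) ux.
  by split => //; exact: odd_excursion.
Qed.

End VisitParity.

Lemma back_visits_both_parities x0 (w : X -> bool) (d : bool) N : lconst w -> (exists z, w z) ->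
  exists J, [/\ (N <= J)%N, w (iter J alphai x0) & back_parity x0 J = d].
Proof.
move=> lw wz; apply: contrapT => none.
have other J : (N <= J)%N -> w (iter J alphai x0) -> back_parity x0 J = ~~ d.
  move=> NJ wJ; have : back_parity x0 J != d by apply/eqP => par; apply: none; exists J.
  by case: (back_parity x0 J); case: (d).
have [B hitB] := hit_bound_alphai lw wz.
have [z uz] := odd_visits_nonempty lw hitB.
have [Bu hitU] := hit_bound_alphai (lconst_odd_visits B lw) (ex_intro _ z uz).
have [k _ uk] := hitU (iter N alphai x0); rewrite -iterD in uk.
have [J' kNJ' /andP [wJ' /eqP par]] := odd_visit_flips_parity hitB uk.
have /andP [wk _] := uk.
by move: par; rewrite (other J') ?(other (k + N)%N) //; [case: (d) | lia | lia].
Qed.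

Lemma first_visit_subset x0 (w : X -> bool) (d : bool) : lconst w -> (exists z, w z) ->
  exists v : X -> bool, [/\ lconst v, (forall x, v x -> w x), (exists z, w z && ~~ v z) &
    exists J, [/\ forall j, (j < J)%N -> ~~ v (iter j alphai x0), v (iter J alphai x0)
                & back_parity x0 J = d]].
Proof.
move=> lw wz.
have [J [_ wJ parJ]] := back_visits_both_parities x0 d 0 lw wz.
have [J' [JJ' wJ' _]] := back_visits_both_parities x0 d J.+1 lw wz.
pose q j := if (j < J)%N then iter j alphai x0 else iter J' alphai x0.
have qJ j : (j < J.+1)%N -> q j <> iter J alphai x0.
  by rewrite /q => jJ; case: ifP => [jJ'|_] /iter_alphai_inj; lia.
have [s [ls sJ notq]] := cantor_separate qJ.
exists (fun y => w y && s y); split.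
- exact: (lconst_map2 andb lw ls).
- by move=> x /andP [].
- by exists (iter J' alphai x0); have := notq J (ltnSn J); rewrite /q ltnn wJ' => ->.
- exists J; split; [|by rewrite wJ sJ|by []].
  by move=> j jJ; have := notq j (ltnW jJ); rewrite /q jJ => /negbTE ->; rewrite andbF.
Qed.

Lemma flip_witness_exists x0 (d : bool) (k : nat) (w : X -> bool) : lconst w -> (exists z, w z) ->
  exists u g ns nt, flip_witness x0 (k%:Z * (-1) ^+ d) u g ns nt /\ (forall x, u x -> w x).
Proof.
elim: k w => [|k IH] w lw wz.
  exists (fun _ => false), (fun _ => 0), (fun _ => 0%N), (fun _ => 0%N).
  by rewrite mul0r; split => //; exact: flip_witness0.
have [v [lv vw [z wz'] [J [before vJ parJ]]]] := first_visit_subset x0 d lw wz.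
have [B hitB] := hit_bound_alphai lv (ex_intro (fun y => v y) _ vJ).
have [g1 [ns1 [nt1 W1]]] := flip_witness_odd_visits lv hitB before vJ parJ.
have [u2 [g2 [ns2 [nt2 [W2 u2w]]]]] :=
  IH _ (lconst_map2 (fun a b => a && ~~ b) lw lv) (ex_intro (fun y => w y && ~~ v y) z wz').
have dj x : odd_visits v B x -> ~~ u2 x.
  by move=> /andP [vx _]; apply/negP => /u2w; rewrite vx andbF.
exists (fun x => odd_visits v B x || u2 x), (fun x => g1 x + g2 x),
  (fun x => ns1 x + ns2 x)%N, (fun x => nt1 x + nt2 x)%N; split.
  by rewrite -addn1 PoszD mulrDl mul1r addrC; exact: flip_witness_union W1 W2 dj.
by move=> x /orP [/andP [/vw] | /u2w /andP []].
Qed.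

End OddReturns.

(** * The full group and its twisted action on C(X, Z) *)

Lemma jump_in_full_group (alpha alphai : X -> X) (ns nt : X -> nat) :
  continuous alpha -> continuous alphai -> lconst ns -> lconst nt ->
  cancel (jump alpha ns) (jump alphai nt) -> cancel (jump alphai nt) (jump alpha ns) ->
  in_full_group alpha alphai (jump alpha ns) (fun x => Posz (ns x)).
Proof.
move=> ca cai lns lnt sK tK; split; last by split; [exact: lconst_map | by []].
split; first exact: continuous_select lns (continuous_iter ca).
by exists (jump alphai nt); split => //; exact: continuous_select lnt (continuous_iter cai).
Qed.

Lemma iter_astar (R : realType) (alphai : X -> X) (phi : X -> R * R -> R * R) k
    (f : X -> int) x :
  iter k (astar alphai phi) f x =
    (-1) ^+ back_parity alphai (o_phi phi) x k * f (iter k alphai x).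
Proof.
elim: k x => [|k IH] x; first by rewrite /= expr0 mul1r.
by rewrite iterS {1}/astar IH back_parityS signr_addb mulrA -iterSr.
Qed.

Lemma iter_astar_inv0 (R : realType) (alpha : X -> X) (phi : X -> R * R -> R * R) n :
  iter n (astar_inv alpha phi) (fun _ => 0) = fun _ => 0.
Proof. by elim: n => //= n ->; apply: funext => x; rewrite /astar_inv mulr0. Qed.

Lemma sigma_star_jump (R : realType) (alpha alphai : X -> X) (phi : X -> R * R -> R * R)
    (ns nt : X -> nat) (f : X -> int) x :
  cancel alpha alphai -> cancel alphai alpha ->
  cancel (jump alphai nt) (jump alpha ns) -> cancel (jump alpha ns) (jump alphai nt) ->
  let y := jump alphai nt x in
  sigma_star alpha alphai phi (fun z => Posz (ns z)) f x =
    (-1) ^+ fwd_parity alpha (o_phi phi) y (ns y) * f y.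
Proof.
move=> aK aiK sK tK y; set k0 := ns y.
have xE : iter k0 alpha y = x := sK x.
pose F k := astar_pow alpha alphai phi k (fun z => f z * (Posz (ns z) == k)%:Z) x.
have F0 k : k <> Posz k0 -> F k = 0.
  case: k => [j|j] jk0; rewrite /F /astar_pow; last first.
    have -> : (fun z => f z * (Posz (ns z) == Negz j)%:Z) = fun _ => 0.
      by apply: funext => z; rewrite [_ == _](_ : _ = false) // mulr0.
    by rewrite iter_astar_inv0.
  rewrite iter_astar; case: eqP => [[nsj]|_]; last by rewrite !mulr0.
  have : jump alpha ns (iter j alphai x) = x by rewrite /jump nsj (iter_cancel aiK) // subnn.
  by move/(congr1 (jump alphai nt)); rewrite tK -/y => yE; case: jk0; rewrite /k0 -yE nsj.
have -> : sigma_star alpha alphai phi (fun z => Posz (ns z)) f x = F (Posz k0).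
  have -> : F (Posz k0) = \sum_(k \in [set Posz k0]) F k by rewrite fsbig_set1.
  rewrite (fsbig_widen [set Posz k0] [set: int] F) //.
  by move=> k [_ kk0]; apply: F0.
have parE := back_parity_iter (o_phi phi) aK y k0; rewrite xE in parE.
have yE : iter k0 alphai x = y by rewrite -xE (iter_cancel aK) // subnn.
by rewrite /F /= iter_astar parE yE eqxx mulr1.
Qed.

Lemma sigma_star_flip (R : realType) (alpha alphai : X -> X) (phi : X -> R * R -> R * R)
    x0 c u g ns nt :
  cancel alpha alphai -> cancel alphai alpha ->
  flip_witness alpha alphai (o_phi phi) x0 c u g ns nt ->
  forall x, sigma_star alpha alphai phi (fun y => Posz (ns y)) (ind [set y | u y]) x =
    - ind [set y | u y] x.
Proof.
move=> aK aiK W x.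
rewrite (sigma_star_jump _ _ _ aK aiK (fw_sigmaK W) (fw_tauK W)) /ind !asboolb /=.
set y := jump alphai nt x; case ux : (u x).
  have [_ uy _] := fw_stable W ux; have [_ _ odd] := fw_stable W uy.
  by rewrite uy odd expr1 mulr1.
case uy : (u y); last by rewrite mulr0 oppr0.
by have [] := fw_stable W uy; rewrite /y (fw_sigmaK W) ux.
Qed.

Theorem lemma6p3 (R : realType) (alpha alphai : X -> X)
  (phi : X -> R * R -> R * R) :
  minimal_homeo alpha -> cancel alpha alphai -> cancel alphai alpha ->
  (forall x, circle_isom (phi x)) ->
  {within [set: X] `*` circle R, continuous (fun z : X * (R * R) => phi z.1 z.2)} ->
  skew_minimal alpha phi ->
  ~ orientation_preserving alphai phi ->
  forall (x0 : X) (m : int) (O : set X), clopen O -> O !=set0 ->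
  exists U : set X, [/\ clopen U, U `<=` O,
    K1_equiv alphai phi x0 (ind U) (fun x => m * h_phi alphai phi x) &
    exists (sigma : X -> X) (n : X -> int),
      [/\ in_full_group alpha alphai sigma n,
          forall x, ~ U x -> sigma x = x &
          forall x, sigma_star alpha alphai phi n (ind U) x = - ind U x]].
Proof.
move=> [[alpha_cont [alphai' [aK' aiK' alphai'_cont]]] alpha_min] aK aiK iso cphi _ not_orient.
move=> x0 m O clO [z Oz].
have alphai_cont : continuous alphai.
  by have -> : alphai = alphai' by apply: funext => x; rewrite -{1}(aiK' x) aK.
have [u [g [ns [nt [W uO]]]]] := flip_witness_exists aK aiK alpha_cont alphai_cont alpha_min
  (lconst_o_phi iso cphi) not_orient x0 (m < 0) `|m|%N (clopen_lconst clO)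
  (ex_intro (fun y => `[< O y >]) z (asboolT Oz)).
rewrite mulrC -intEsign in W.
exists [set x | u x]; split.
- exact: lconst_clopen (fw_lconst_u W).
- by move=> x /uO /asboolP.
- exists g; split; [exact: fw_lconst_g W | exact: fw_g_x0 W |].
  by move=> x; rewrite /ind asboolb; exact: fw_K1 W x.
- exists (jump alpha ns), (fun x => Posz (ns x)); split.
  + exact: jump_in_full_group alpha_cont alphai_cont (fw_lconst_ns W) (fw_lconst_nt W)
      (fw_tauK W) (fw_sigmaK W).
  + by move=> x /negP /(fw_fixed W) [nsx _]; rewrite /jump nsx.
  + exact: sigma_star_flip aK aiK W.
Qed.
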